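(* Let $C>0$, $L>0$, $R\neq 0$, $\mu\in\mathbb{R}$, $h>0$ and let $\hat q:\mathbb{R}\to\mathbb{R}$ be any function. Suppose real sequences $v_{C,k},i_{C,k},i_{L,k},v_{L,k},v_{R,k},i_{R,k},v_{M,k},i_{M,k},\varphi_{M,k}$, $k=0,1,2,\dots$, satisfy for all $k$: $$i_{C,k}=C\frac{v_{C,k+1}-v_{C,k}}{h},\quad v_{L,k}=L\frac{i_{L,k+1}-i_{L,k}}{h},\quad v_{R,k}=Ri_{R,k},$$ $$i_{M,k}=\frac{\hat q(\varphi_{M,k+1})-\hat q(\varphi_{M,k})}{h},\quad \varphi_{M,k+1}=\varphi_{M,k}+hv_{M,k},$$ $$i_{L,k}=i_{M,k}+i_{C,k},\quad i_{L,k}=i_{R,k},\quad v_{C,k}+v_{R,k}+v_{L,k}-\mu v_{C,k}=0,\quad v_{C,k}=v_{M,k}.$$ Then: 1) $(v_{C,k},i_{L,k},\varphi_{M,k})$ is an orbit of the three-dimensional map $$\begin{aligned} v_{C,k+1}&=v_{C,k}-\tfrac{1}{C}\big(\hat q(\varphi_{M,k}+hv_{C,k})-\hat q(\varphi_{M,k})\big)+\tfrac{h}{C}i_{L,k},\\ i_{L,k+1}&=\big(1-\tfrac{Rh}{L}\big)i_{L,k}+\tfrac{h}{L}(\mu-1)v_{C,k},\\ \varphi_{M,k+1}&=\varphi_{M,k}+hv_{C,k}.\end{aligned}$$ 2) For any step size $h>0$, the function $\Theta_{MLC}(v_C,i_L,\varphi_M)=Cv_C+\frac{Li_L}{R}+\hat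 q(\varphi_M)+\frac{1-\mu}{R}\varphi_M$ is a first integral of this map, i.e. it takes the same value at $k+1$ as at $k$ for all $k\ge0$ along every orbit. 3) Consequently $\mathbb{R}^3$ is foliated into the invariant sets $\mathcal{M}_{MLC}(Q_0)=\{(v_C,i_L,\varphi_M)\in\mathbb{R}^3:\Theta_{MLC}(v_C,i_L,\varphi_M)=Q_0\}$, $Q_0\in\mathbb{R}$, and along any orbit of the map lying in $\mathcal{M}_{MLC}(Q_0)$, setting $q^0_{L,k}=h\sum_{j=0}^{k-1}i_{L,j}$ and $y_k=q^0_{L,k}+\frac{\mu-1}{R}\varphi_{M,0}-\frac{L}{R}i_{L,0}$, the pair $(\varphi_{M,k},y_k)$ obeys the two-dimensional map $$\varphi_{M,k+1}=\varphi_{M,k}+\tfrac{h}{C}y_k-\tfrac{h}{C}\hat q(\varphi_{M,k})+\tfrac{h}{C}Q_0,\qquad y_{k+1}=\big(1-\tfrac{hR}{L}\big)y_k+\tfrac{h}{L}(\mu-1)\varphi_{M,k}.$$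
   Context: These equations model a discrete-time memristor Murali-Lakshmanan-Chua circuit: a capacitor $C$ in parallel with a flux-controlled memristor $q_M=\hat q(\varphi_M)$, connected to a series branch containing a resistor $R$, an inductor $L$ and a voltage-controlled voltage source of value $\mu v_C$, discretized with step size $h$. The quantity $q^0_{L,k}$ is the (discrete) incremental charge of the inductor. *)

From HB Require Import structures.
From mathcomp Require Import all_boot all_order all_algebra.
From mathcomp Require Import reals.
Set Implicit Arguments. Unset Strict Implicit. Unset Printing Implicit Defensive.
Import Order.TTheory GRing.Theory Num.Theory.
Local Open Scope ring_scope.

Section MLC.
Variable R : realType.

(* The three-dimensional discrete MLC map on states (v_C, i_L, phi_M).
   Rr is the resistance R of the paper. *)
Definition mlc_map (C L Rr mu h : R) (qhat : R -> R) (p : R * R * R)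
  : R * R * R :=
  let: (vC, iL, phi) := p in
  (vC - C^-1 * (qhat (phi + h * vC) - qhat phi) + h / C * iL,
   (1 - Rr * h / L) * iL + h / L * (mu - 1) * vC,
   phi + h * vC).

Definition is_orbit (F : R * R * R -> R * R * R) (x : nat -> R * R * R) : Prop :=
  forall k, x k.+1 = F (x k).

Definition Theta_MLC (C L Rr mu : R) (qhat : R -> R) (p : R * R * R) : R :=
  let: (vC, iL, phi) := p in
  C * vC + L * iL / Rr + qhat phi + (1 - mu) / Rr * phi.

Definition M_MLC (C L Rr mu : R) (qhat : R -> R) (Q0 : R) (p : R * R * R) : Prop :=
  Theta_MLC C L Rr mu qhat p = Q0.

Definition q0L (h : R) (iL : nat -> R) (k : nat) : R :=
  h * \sum_(0 <= j < k) iL j.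

Definition y_MLC (L Rr mu h : R) (iL phi : nat -> R) (k : nat) : R :=
  q0L h iL k + (mu - 1) / Rr * phi 0%N - L / Rr * iL 0%N.

End MLC.

(* Eliminating i_C, v_L, v_R, i_R, v_M and i_M from the circuit equations gives the
   three-dimensional map.  Along the map, C v_C + q(phi_M) grows by h i_L (current law)
   while (L i_L + (1 - mu) phi_M) / R decreases by h i_L (voltage law), so Theta_MLC is
   conserved.  The quantity ((mu - 1) phi_M - L i_L) / R also grows by h i_L, and starts
   equal to y_0, hence equals y_k; solving Theta_MLC = Q0 for C v_C then turns the
   phi_M-equation into the reduced map. *)
From HB Require Import structures.
From mathcomp Require Import all_boot all_order all_algebra.
From mathcomp Require Import reals.
From mathcomp Require Import ring.
Set Implicit Arguments. Unset Strict Implicit. Unset Printing Implicit Defensive.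
Import Order.TTheory GRing.Theory Num.Theory.
Local Open Scope ring_scope.

Section MLCMap.
Variables (R : realType) (C L Rr mu h : R) (qhat : R -> R).
Hypotheses (C_neq0 : C != 0) (L_neq0 : L != 0) (Rr_neq0 : Rr != 0).

Local Notation F := (mlc_map C L Rr mu h qhat).
Local Notation Theta := (Theta_MLC C L Rr mu qhat).

Lemma Theta_MLC_map (p : R * R * R) : Theta (F p) = Theta p.
Proof. by case: p => [[vC iL] phi] /=; field; rewrite Rr_neq0 L_neq0 C_neq0. Qed.

Lemma Theta_MLC_orbit (x : nat -> R * R * R) :
  is_orbit F x -> forall k, Theta (x k.+1) = Theta (x k).
Proof. by move=> orbit_x k; rewrite orbit_x Theta_MLC_map. Qed.

Lemma M_MLC_unique_level (p : R * R * R) : exists! Q0 : R, M_MLC C L Rr mu qhat Q0 p.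
Proof. by exists (Theta p); split=> // Q0 <-. Qed.

Lemma M_MLC_map (Q0 : R) (p : R * R * R) :
  M_MLC C L Rr mu qhat Q0 p -> M_MLC C L Rr mu qhat Q0 (F p).
Proof. by rewrite /M_MLC Theta_MLC_map. Qed.

Lemma y_MLC_S (iL phi : nat -> R) (k : nat) :
  y_MLC L Rr mu h iL phi k.+1 = y_MLC L Rr mu h iL phi k + h * iL k.
Proof. by rewrite /y_MLC /q0L big_nat_recr //=; ring. Qed.

Section Orbit.
Variable x : nat -> R * R * R.
Hypothesis orbit_x : is_orbit F x.

Local Notation vC k := (x k).1.1.
Local Notation iL k := (x k).1.2.
Local Notation phi k := (x k).2.

Lemma orbit_phiS k : phi k.+1 = phi k + h * vC k.
Proof. by rewrite orbit_x; case: (x k) => [[]]. Qed.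

Lemma orbit_iLS k : iL k.+1 = (1 - Rr * h / L) * iL k + h / L * (mu - 1) * vC k.
Proof. by rewrite orbit_x; case: (x k) => [[]]. Qed.

Lemma y_MLC_orbit k :
  y_MLC L Rr mu h (fun k => iL k) (fun k => phi k) k
  = (mu - 1) / Rr * phi k - L / Rr * iL k.
Proof.
elim: k => [|k IHk]; first by rewrite /y_MLC /q0L big_geq // mulr0 add0r.
by rewrite y_MLC_S IHk orbit_phiS orbit_iLS; field; rewrite Rr_neq0 L_neq0.
Qed.

End Orbit.

Section Circuit.
Variables vC iC iL vL vR iR vM iM phiM : nat -> R.
Hypotheses
  (h_neq0 : h != 0)
  (capacitor : forall k, iC k = C * (vC k.+1 - vC k) / h)
  (inductor : forall k, vL k = L * (iL k.+1 - iL k) / h)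
  (resistor : forall k, vR k = Rr * iR k)
  (memristor : forall k, iM k = (qhat (phiM k.+1) - qhat (phiM k)) / h)
  (flux : forall k, phiM k.+1 = phiM k + h * vM k)
  (current_law : forall k, iL k = iM k + iC k)
  (series_current : forall k, iL k = iR k)
  (voltage_law : forall k, vC k + vR k + vL k - mu * vC k = 0)
  (parallel_voltage : forall k, vC k = vM k).

Lemma circuit_orbit : is_orbit F (fun k => (vC k, iL k, phiM k)).
Proof.
move=> k /=.
have phiS : phiM k.+1 = phiM k + h * vC k by rewrite flux parallel_voltage.
have vCS : vC k.+1 = vC k + h / C * (iL k - iM k).
  by rewrite (current_law k) capacitor; field; rewrite h_neq0 C_neq0.
have vL_eq : vL k = (mu - 1) * vC k - Rr * iL k.
  rewrite -[vL k]subr0 -(voltage_law k) resistor -series_current; ring.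
have iLS : iL k.+1 = iL k + h / L * vL k.
  by rewrite inductor; field; rewrite h_neq0 L_neq0.
rewrite vCS iLS vL_eq memristor phiS.
by congr (_, _, _); field; rewrite ?C_neq0 ?h_neq0.
Qed.

End Circuit.

End MLCMap.

Theorem proposition3 (R : realType) (C L Rr mu h : R) (qhat : R -> R)
  (vC iC iL vL vR iR vM iM phiM : nat -> R) :
  0 < C -> 0 < L -> Rr != 0 -> 0 < h ->
  (forall k, iC k = C * (vC k.+1 - vC k) / h) ->
  (forall k, vL k = L * (iL k.+1 - iL k) / h) ->
  (forall k, vR k = Rr * iR k) ->
  (forall k, iM k = (qhat (phiM k.+1) - qhat (phiM k)) / h) ->
  (forall k, phiM k.+1 = phiM k + h * vM k) ->
  (forall k, iL k = iM k + iC k) ->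
  (forall k, iL k = iR k) ->
  (forall k, vC k + vR k + vL k - mu * vC k = 0) ->
  (forall k, vC k = vM k) ->
  (* 1) orbit of the 3D map *)
  is_orbit (mlc_map C L Rr mu h qhat) (fun k => (vC k, iL k, phiM k))
  /\
  (* 2) Theta_MLC is a first integral along every orbit *)
  (forall x : nat -> R * R * R, is_orbit (mlc_map C L Rr mu h qhat) x ->
     forall k, Theta_MLC C L Rr mu qhat (x k.+1) = Theta_MLC C L Rr mu qhat (x k))
  /\
  (* 3) foliation of R^3 into invariant level sets ... *)
  (forall p : R * R * R, exists! Q0 : R, M_MLC C L Rr mu qhat Q0 p)
  /\
  (forall (Q0 : R) (p : R * R * R), M_MLC C L Rr mu qhat Q0 p ->
     M_MLC C L Rr mu qhat Q0 (mlc_map C L Rr mu h qhat p))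
  /\
  (* ... and the reduced 2D map on each level set *)
  (forall (x : nat -> R * R * R) (Q0 : R),
     is_orbit (mlc_map C L Rr mu h qhat) x ->
     (forall k, M_MLC C L Rr mu qhat Q0 (x k)) ->
     let phi := fun k => (x k).2 in
     let i := fun k => (x k).1.2 in
     let y := y_MLC L Rr mu h i phi in
     forall k,
       phi k.+1 = phi k + h / C * y k - h / C * qhat (phi k) + h / C * Q0 /\
       y k.+1 = (1 - h * Rr / L) * y k + h / L * (mu - 1) * phi k).
Proof.
move=> C_gt0 L_gt0 Rr_neq0 h_gt0 capacitor inductor resistor memristor flux
  current_law series_current voltage_law parallel_voltage.
have C_neq0 := lt0r_neq0 C_gt0.
have L_neq0 := lt0r_neq0 L_gt0.
split; first exact: (circuit_orbit C_neq0 L_neq0 (lt0r_neq0 h_gt0) capacitor inductor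
  resistor memristor flux current_law series_current voltage_law parallel_voltage).
split; first exact: Theta_MLC_orbit.
split; first exact: M_MLC_unique_level.
split; first exact: M_MLC_map.
move=> x Q0 orbit_x on_level phi i y k.
have level_k : Theta_MLC C L Rr mu qhat (x k) = Q0 := on_level k.
have y_k := y_MLC_orbit L_neq0 Rr_neq0 orbit_x k.
rewrite /y y_MLC_S y_k /i /phi (orbit_phiS orbit_x) -level_k.
case: (x k) => [[vCk iLk] phik] /=.
by split; field; rewrite ?C_neq0 ?L_neq0 ?Rr_neq0.
Qed.
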